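(* The number of pairwise nonequivalent regular graphical Hadamard matrices of order $4^m$ is unbounded as $m\to\infty$.
   Context: A Hadamard matrix of order $n$ is an $n\times n$ matrix $H$ with entries $\pm1$ such that $HH^{\top}=nI$. It is graphical if it is symmetric with constant diagonal, and regular if all its row sums and column sums are equal. Two Hadamard matrices are equivalent if one can be obtained from the other by permuting rows, permuting columns, and multiplying rows and columns by $-1$. *)

From HB Require Import structures.
From mathcomp Require Import all_boot all_order all_algebra all_fingroup.
Set Implicit Arguments. Unset Strict Implicit. Unset Printing Implicit Defensive.
Import GRing.Theory Num.Theory.
Local Open Scope ring_scope.

Definition hadamard (n : nat) (H : 'M[int]_n) : Prop :=
  (forall i j, H i j = 1 \/ H i j = -1) /\ H *m H^T = (n%:R)%:M.

Definition graphical (n : nat) (H : 'M[int]_n) : Prop :=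
  H^T = H /\ (forall i j : 'I_n, H i i = H j j).

Definition regular (n : nat) (H : 'M[int]_n) : Prop :=
  exists c : int,
    (forall i, \sum_(j < n) H i j = c) /\ (forall j, \sum_(i < n) H i j = c).

Definition hadamard_equiv (n : nat) (H H' : 'M[int]_n) : Prop :=
  exists (s t : 'S_n) (a b : 'I_n -> bool),
    forall i j, H' i j = (-1) ^+ a i * (-1) ^+ b j * H (s i) (t j).

From HB Require Import structures.
From mathcomp Require Import all_boot all_order all_algebra all_fingroup.
From mathcomp Require Import ring zify.
Set Implicit Arguments. Unset Strict Implicit. Unset Printing Implicit Defensive.
Import Order.TTheory GRing.Theory Num.Theory.
Local Open Scope ring_scope.

(* For a Hadamard matrix H of order n, count the quadruples of rows whose
   entrywise product is a constant vector.  Permuting rows and columns permutes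
   the quadruples, and sign changes multiply each such product by a constant, so
   the count is an equivalence invariant; it is multiplicative under Kronecker
   products.  Summing the squared entry sums of all n^4 quadruple products gives
   n^5 by orthogonality of the columns, and each constant quadruple contributes
   n^2, so the count is at most n^3, with strict inequality as soon as some
   nonconstant quadruple has nonzero entry sum.  The matrix J - 2I of order 4
   attains 4^3, while an explicit regular graphical Hadamard matrix B of order
   64 does not.  Hence the Kronecker products of k copies of B with 3(N - k)
   copies of J - 2I, for k < N, are regular graphical Hadamard matrices of
   order 4^(3N) with pairwise distinct counts. *)

Lemma sum_divmod_mul (R : pzSemiRingType) r n (phi psi : nat -> R) : (0 < r)%N ->
  \sum_(0 <= c < r * n) phi (c %% r)%N * psi (c %/ r)%N =
  (\sum_(0 <= x < r) phi x) * (\sum_(0 <= y < n) psi y).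
Proof.
move=> r_gt0; elim: n => [|n IHn].
  by rewrite muln0 [LHS]big_geq // [X in _ * X]big_geq ?mulr0.
rewrite mulnS addnC (big_cat_nat _ (leq_addr _ _)) //= IHn big_nat_recr //= mulrDr.
congr (_ + _); rewrite -{1}[(r * n)%N]add0n big_addn addKn mulr_suml.
apply: eq_big_nat => x /andP[_ x_lt_r].
by rewrite addnC mulnC modnMDl divnMDl // modn_small // divn_small // addn0.
Qed.

Lemma ler_ltr_sum_nat (R : numDomainType) n (F G : nat -> R) w :
  (forall i, (i < n)%N -> F i <= G i) -> (w < n)%N -> F w < G w ->
  \sum_(0 <= i < n) F i < \sum_(0 <= i < n) G i.
Proof.
move=> leFG wn ltFG; rewrite !big_mkord (bigD1 (Ordinal wn)) //=.
rewrite [ltRHS](bigD1 (Ordinal wn)) //=.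
by rewrite ltr_leD // ler_sum // => i _; apply: leFG.
Qed.

Lemma sum_nat_delta n c (x : int) : (c < n)%N ->
  \sum_(0 <= c' < n) x *+ (c == c') = x.
Proof.
move=> cn; rewrite big_mkord (bigD1 (Ordinal cn)) //= eqxx big1 ?addr0 //.
move=> c' ne_c'; suff /negbTE -> : c != c' by [].
by apply: contraNneq ne_c' => eq_c; apply/eqP/val_inj; rewrite /= eq_c.
Qed.

Definition sum4 n (F : nat -> nat -> nat -> nat -> int) : int :=
  \sum_(0 <= i < n) \sum_(0 <= j < n) \sum_(0 <= k < n) \sum_(0 <= l < n) F i j k l.

Lemma eq_sum4 n (F G : nat -> nat -> nat -> nat -> int) :
  (forall i j k l, F i j k l = G i j k l) -> sum4 n F = sum4 n G.
Proof.
move=> eFG; apply: eq_bigr => i _; apply: eq_bigr => j _; apply: eq_bigr => k _.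
by apply: eq_bigr => l _.
Qed.

Lemma sum4_mulr n (F : nat -> nat -> nat -> nat -> int) x :
  sum4 n F * x = sum4 n (fun i j k l => F i j k l * x).
Proof.
rewrite /sum4 mulr_suml; apply: eq_bigr => i _; rewrite mulr_suml.
by apply: eq_bigr => j _; rewrite mulr_suml; apply: eq_bigr => k _; rewrite mulr_suml.
Qed.

Lemma sum4_divmod_mul r n (F G : nat -> nat -> nat -> nat -> int) : (0 < r)%N ->
  sum4 (r * n) (fun i j k l =>
    F (i %% r)%N (j %% r)%N (k %% r)%N (l %% r)%N *
    G (i %/ r)%N (j %/ r)%N (k %/ r)%N (l %/ r)%N) =
  sum4 r F * sum4 n G.
Proof.
move=> r_gt0; rewrite /sum4.
under eq_bigr => i _ do under eq_bigr => j _ do under eq_bigr => k _ do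
  rewrite (sum_divmod_mul n (F (i %% r)%N (j %% r)%N (k %% r)%N)
                             (G (i %/ r)%N (j %/ r)%N (k %/ r)%N) r_gt0).
under eq_bigr => i _ do under eq_bigr => j _ do
  rewrite (sum_divmod_mul n (fun z => \sum_(0 <= x < r) F (i %% r)%N (j %% r)%N z x)
                             (fun z => \sum_(0 <= x < n) G (i %/ r)%N (j %/ r)%N z x) r_gt0).
under eq_bigr => i _ do
  rewrite (sum_divmod_mul n
    (fun z => \sum_(0 <= y < r) \sum_(0 <= x < r) F (i %% r)%N z y x)
    (fun z => \sum_(0 <= y < n) \sum_(0 <= x < n) G (i %/ r)%N z y x) r_gt0).
exact: (sum_divmod_mul n
  (fun z => \sum_(0 <= w < r) \sum_(0 <= y < r) \sum_(0 <= x < r) F z w y x)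
  (fun z => \sum_(0 <= w < n) \sum_(0 <= y < n) \sum_(0 <= x < n) G z w y x) r_gt0).
Qed.

Lemma sum4_exchange n m (F : nat -> nat -> nat -> nat -> nat -> int) :
  sum4 n (fun i j k l => \sum_(0 <= c < m) F c i j k l) = \sum_(0 <= c < m) sum4 n (F c).
Proof.
rewrite /sum4.
under eq_bigr => i _ do under eq_bigr => j _ do under eq_bigr => k _ do rewrite exchange_big.
under eq_bigr => i _ do under eq_bigr => j _ do rewrite exchange_big.
under eq_bigr => i _ do rewrite exchange_big.
by rewrite exchange_big.
Qed.

Lemma sum4_pow4 n (g : nat -> int) :
  sum4 n (fun i j k l => g i * g j * g k * g l) = (\sum_(0 <= i < n) g i) ^+ 4.
Proof.
rewrite /sum4.
under eq_bigr => i _ do under eq_bigr => j _ do under eq_bigr => k _ do rewrite -mulr_sumr.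
under eq_bigr => i _ do under eq_bigr => j _ do rewrite -mulr_suml -mulr_sumr.
under eq_bigr => i _ do rewrite -!mulr_suml -mulr_sumr.
by rewrite -!mulr_suml !exprS expr0 mulr1 !mulrA.
Qed.

Lemma ltr_sum4 n (F G : nat -> nat -> nat -> nat -> int) i0 j0 k0 l0 :
  (forall i j k l, (i < n)%N -> (j < n)%N -> (k < n)%N -> (l < n)%N ->
     F i j k l <= G i j k l) ->
  (i0 < n)%N -> (j0 < n)%N -> (k0 < n)%N -> (l0 < n)%N ->
  F i0 j0 k0 l0 < G i0 j0 k0 l0 -> sum4 n F < sum4 n G.
Proof.
move=> leFG i0n j0n k0n l0n ltFG; apply: (ler_ltr_sum_nat (w := i0)) => // [i ilt|].
  by do 3 apply: ler_sum_nat => ? /andP[_ ?]; apply: leFG.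
apply: (ler_ltr_sum_nat (w := j0)) => // [j jlt|].
  by do 2 apply: ler_sum_nat => ? /andP[_ ?]; apply: leFG.
apply: (ler_ltr_sum_nat (w := k0)) => // [k klt|].
  by apply: ler_sum_nat => ? /andP[_ ?]; apply: leFG.
by apply: (ler_ltr_sum_nat (w := l0)) => // l llt; apply: leFG.
Qed.

Definition pm_one (x : int) := x = 1 \/ x = -1.

Lemma pm_oneM x y : pm_one x -> pm_one y -> pm_one (x * y).
Proof. by case=> ->; case=> ->; rewrite /pm_one ?mulN1r ?mul1r ?opprK; auto. Qed.

Lemma pm_one_neq0 x : pm_one x -> x != 0.
Proof. by case=> ->. Qed.

Lemma pm_one_sign (b : bool) : pm_one ((-1) ^+ b).
Proof. by case: b; [right | left]. Qed.

Definition const_on n (f : nat -> int) : bool :=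
  all2rel (fun c c' => f c == f c') (iota 0 n).

Lemma mem_iota0 n x : (x \in iota 0 n) = (x < n)%N.
Proof. by rewrite mem_iota leq0n add0n. Qed.

Lemma const_onP n f :
  reflect (forall c c', (c < n)%N -> (c' < n)%N -> f c = f c') (const_on n f).
Proof.
apply: (iffP allrelP) => [h c c' cn c'n | h c c'].
  by apply/eqP/h; rewrite mem_iota0.
by rewrite !mem_iota0 => cn c'n; apply/eqP/h.
Qed.

Lemma eq_const_on n f g : f =1 g -> const_on n f = const_on n g.
Proof. by move=> efg; apply: eq_allrel => c c'; rewrite !efg. Qed.

Lemma const_on_divmod r n (p q : nat -> int) : (0 < r)%N -> (0 < n)%N ->
  (forall x, p x != 0) -> (forall y, q y != 0) ->
  const_on (r * n) (fun c => p (c %% r)%N * q (c %/ r)%N) = const_on r p && const_on n q.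
Proof.
move=> r_gt0 n_gt0 p_neq0 q_neq0.
apply/const_onP/andP => [h | [/const_onP hp /const_onP hq] c c' cn c'n]; last first.
  have div_lt z : (z < r * n)%N -> (z %/ r < n)%N by rewrite ltn_divLR // mulnC.
  by rewrite (hp (c %% r)%N (c' %% r)%N) ?ltn_pmod // (hq (c %/ r)%N (c' %/ r)%N) ?div_lt.
split; apply/const_onP => x x' xb x'b.
  have lt_rn z : (z < r)%N -> (z < r * n)%N by move/leq_trans; apply; rewrite leq_pmulr.
  apply: (mulIf (q_neq0 0%N)); have := h x x' (lt_rn x xb) (lt_rn x' x'b).
  by rewrite !modn_small // !divn_small.
apply: (mulfI (p_neq0 0%N)); have := h (r * x) (r * x')%N.
by rewrite !ltn_pmul2l // !modnMr !mulKn //; apply.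
Qed.

Definition col_prod4 (G : nat -> nat -> int) i j k l c := G i c * G j c * G k c * G l c.

Definition const_quad n G i j k l := const_on n (col_prod4 G i j k l).

Definition nconst n G : int := sum4 n (fun i j k l => (const_quad n G i j k l)%:R).

Lemma col_prod4_neq0 G i j k l c :
  (forall x y, pm_one (G x y)) -> col_prod4 G i j k l c != 0.
Proof. by move=> G_pm; apply: pm_one_neq0; rewrite /col_prod4; do ! apply: pm_oneM. Qed.

Lemma nconst_gt0 n G : (0 < n)%N -> (forall x y, pm_one (G x y)) -> 0 < nconst n G.
Proof.
move=> n_gt0 G_pm; have -> : 0 = sum4 n (fun _ _ _ _ => 0) by rewrite /sum4 !big1.
apply: (ltr_sum4 (i0 := 0%N) (j0 := 0%N) (k0 := 0%N) (l0 := 0%N)) => //.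
suff -> : const_quad n G 0 0 0 0 by [].
apply/const_onP => c c' _ _; rewrite /col_prod4.
by case: (G_pm 0%N c) => ->; case: (G_pm 0%N c') => ->.
Qed.

Lemma sum4_sqr_col_sum n G :
  (forall c c', (c < n)%N -> (c' < n)%N ->
     \sum_(0 <= x < n) G x c * G x c' = (n * (c == c'))%:R) ->
  sum4 n (fun i j k l => (\sum_(0 <= c < n) col_prod4 G i j k l c) ^+ 2) = (n ^ 5)%:R.
Proof.
move=> col_orth.
under eq_sum4 => i j k l do
  (rewrite expr2 mulr_suml; under eq_bigr => c _ do rewrite mulr_sumr).
rewrite sum4_exchange; under eq_bigr => c _ do rewrite sum4_exchange.
transitivity
  (\sum_(0 <= c < n) \sum_(0 <= c' < n) (\sum_(0 <= x < n) G x c * G x c') ^+ 4).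
  apply: eq_bigr => c _; apply: eq_bigr => c' _; rewrite -sum4_pow4.
  by apply: eq_sum4 => i j k l; rewrite /col_prod4; ring.
have delta4 c c' : ((n * (c == c'))%:R) ^+ 4 = (n ^ 4)%:R *+ (c == c') :> int.
  by case: (c == c'); rewrite ?muln1 ?muln0 ?natrX ?expr0n.
rewrite big_nat_cond; under eq_bigr => c /andP[/andP[_ cn] _].
  rewrite big_nat_cond.
  under eq_bigr => c' /andP[/andP[_ c'n] _] do rewrite col_orth // delta4.
  by rewrite -big_nat_cond sum_nat_delta //; over.
by rewrite -big_nat_cond sumr_const_nat subn0 -mulrnA -expnSr.
Qed.

Lemma const_quad_sqr n G i j k l : (forall x y, pm_one (G x y)) ->
  const_quad n G i j k l -> (\sum_(0 <= c < n) col_prod4 G i j k l c) ^+ 2 = (n ^ 2)%:R.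
Proof.
move=> G_pm /const_onP const_P.
rewrite (eq_big_nat _ _ (F2 := fun=> col_prod4 G i j k l 0%N)).
  rewrite sumr_const_nat subn0 natrX.
  have : pm_one (col_prod4 G i j k l 0%N) by rewrite /col_prod4; do ! apply: pm_oneM.
  by case=> ->; rewrite ?mulNrn ?sqrrN.
by move=> c /andP[_ cn]; apply: const_P => //; apply: leq_ltn_trans cn.
Qed.

Lemma nconst_lt n G i j k l : (forall x y, pm_one (G x y)) ->
  (forall c c', (c < n)%N -> (c' < n)%N ->
     \sum_(0 <= x < n) G x c * G x c' = (n * (c == c'))%:R) ->
  (i < n)%N -> (j < n)%N -> (k < n)%N -> (l < n)%N ->
  ~~ const_quad n G i j k l -> \sum_(0 <= c < n) col_prod4 G i j k l c != 0 ->
  nconst n G < (n ^ 3)%:R.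
Proof.
move=> G_pm col_orth ilt jlt klt llt nonconst sum_neq0.
have n2_gt0 : 0 < (n ^ 2)%:R :> int by rewrite ltr0n expn_gt0 (leq_ltn_trans _ ilt).
rewrite -(ltr_pM2r n2_gt0) -natrM -expnD -(sum4_sqr_col_sum col_orth) /nconst sum4_mulr.
apply: (ltr_sum4 (i0 := i) (j0 := j) (k0 := k) (l0 := l)) => //.
  move=> i' j' k' l' _ _ _ _; have [cq | _] := boolP (const_quad n G i' j' k' l').
    by rewrite mul1r (const_quad_sqr G_pm cq).
  by rewrite mul0r sqr_ge0.
by rewrite (negbTE nonconst) mul0r lt0r sqrf_eq0 sum_neq0 sqr_ge0.
Qed.

Definition mx_const_quad n (H : 'M[int]_n) i j k l : bool :=
  [forall c, forall c', H i c * H j c * H k c * H l c == H i c' * H j c' * H k c' * H l c'].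

Definition mx_nconst n (H : 'M[int]_n) : int :=
  \sum_(i < n) \sum_(j < n) \sum_(k < n) \sum_(l < n) (mx_const_quad H i j k l)%:R.

Lemma forall_perm n (t : 'S_n) (P : pred 'I_n) : [forall c, P (t c)] = [forall c, P c].
Proof. by apply/forallP/forallP => h c //; rewrite -(permKV t c). Qed.

Lemma mx_const_quad_equiv n (H H' : 'M[int]_n) (s t : 'S_n) (a b : 'I_n -> bool) :
  (forall i j, H' i j = (-1) ^+ a i * (-1) ^+ b j * H (s i) (t j)) ->
  forall i j k l, mx_const_quad H' i j k l = mx_const_quad H (s i) (s j) (s k) (s l).
Proof.
move=> eH' i j k l.
pose sg : int := (-1) ^+ a i * (-1) ^+ a j * (-1) ^+ a k * (-1) ^+ a l.
have sg_neq0 : sg != 0 by rewrite !mulf_neq0 // signr_eq0.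
(* The column signs cancel since they enter to the fourth power. *)
have eprod c : H' i c * H' j c * H' k c * H' l c =
    sg * (H (s i) (t c) * H (s j) (t c) * H (s k) (t c) * H (s l) (t c)).
  by rewrite !eH' /sg; case: (b c) => /=; ring.
rewrite /mx_const_quad -[RHS](forall_perm t); apply: eq_forallb => c.
rewrite -[RHS](forall_perm t).
by apply: eq_forallb => c'; rewrite !eprod (inj_eq (mulfI sg_neq0)).
Qed.

Lemma mx_nconst_equiv n (H H' : 'M[int]_n) :
  hadamard_equiv H H' -> mx_nconst H = mx_nconst H'.
Proof.
case=> s [t [a [b eH']]]; rewrite /mx_nconst (reindex_inj (@perm_inj _ s)).
apply: eq_bigr => i _; rewrite (reindex_inj (@perm_inj _ s)).
apply: eq_bigr => j _; rewrite (reindex_inj (@perm_inj _ s)).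
apply: eq_bigr => k _; rewrite (reindex_inj (@perm_inj _ s)).
by apply: eq_bigr => l _; rewrite (mx_const_quad_equiv eH').
Qed.

(* A regular graphical Hadamard matrix of order n, given by its entries on
   [0, n) x [0, n); nat indices keep Kronecker products free of ordinal casts. *)
Record rg_hadamard (n : nat) (G : nat -> nat -> int) : Prop := RGHadamard {
  rgh_gt0 : (0 < n)%N;
  rgh_pm : forall x y, pm_one (G x y);
  rgh_sym : forall x y, (x < n)%N -> (y < n)%N -> G x y = G y x;
  rgh_diag : forall x, (x < n)%N -> G x x = G 0%N 0%N;
  rgh_row : forall x, (x < n)%N ->
    \sum_(0 <= y < n) G x y = \sum_(0 <= y < n) G 0%N y;
  rgh_orth : forall x x', (x < n)%N -> (x' < n)%N ->
    \sum_(0 <= y < n) G x y * G x' y = (n * (x == x'))%:R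
}.

Lemma rgh_col_orth n G : rg_hadamard n G -> forall c c', (c < n)%N -> (c' < n)%N ->
  \sum_(0 <= x < n) G x c * G x c' = (n * (c == c'))%:R.
Proof.
move=> hG c c' cn c'n; rewrite -(rgh_orth hG) //; apply: eq_big_nat => x /andP[_ xn].
by rewrite !(rgh_sym hG _ xn).
Qed.

Definition kernel_mx n (G : nat -> nat -> int) : 'M[int]_n := \matrix_(i, j) G i j.

Lemma forall_ord_const_on n (f : nat -> int) :
  [forall c : 'I_n, forall c' : 'I_n, f c == f c'] = const_on n f.
Proof.
apply/forallP/const_onP => [h c c' cn c'n | h c]; last by apply/forallP => c'; apply/eqP/h.
by apply/eqP; have := forallP (h (Ordinal cn)) (Ordinal c'n).
Qed.

Lemma mx_nconst_kernel n G : mx_nconst (kernel_mx n G) = nconst n G.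
Proof.
rewrite /mx_nconst /nconst /sum4 big_mkord; apply: eq_bigr => i _.
rewrite big_mkord; apply: eq_bigr => j _; rewrite big_mkord; apply: eq_bigr => k _.
rewrite big_mkord; apply: eq_bigr => l _; rewrite /mx_const_quad /const_quad.
rewrite -forall_ord_const_on /col_prod4.
by under eq_forallb do under eq_forallb do rewrite !mxE.
Qed.

Lemma kernel_mx_rgh n G : rg_hadamard n G ->
  hadamard (kernel_mx n G) /\ graphical (kernel_mx n G) /\ regular (kernel_mx n G).
Proof.
rewrite /kernel_mx => hG.
have row_sum (i : 'I_n) : \sum_(j < n) kernel_mx n G i j = \sum_(0 <= j < n) G 0%N j.
  by rewrite -(rgh_row hG (ltn_ord i)) big_mkord; apply: eq_bigr => j _; rewrite mxE.
split; [split | split; [split | exists (\sum_(0 <= j < n) G 0%N j); split => //]].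
- by move=> i j; rewrite mxE; apply: (rgh_pm hG).
- apply/matrixP => i i'; rewrite !mxE.
  transitivity (\sum_(0 <= j < n) G i j * G i' j).
    by rewrite big_mkord; apply: eq_bigr => j _; rewrite !mxE.
  by rewrite (rgh_orth hG) // natrM mulr_natr.
- by apply/matrixP => i j; rewrite !mxE (rgh_sym hG).
- by move=> i j; rewrite !mxE !(rgh_diag hG).
- by move=> j; rewrite -(row_sum j); apply: eq_bigr => i _; rewrite !mxE (rgh_sym hG).
Qed.

Definition kron r (A B : nat -> nat -> int) i j : int :=
  A (i %% r)%N (j %% r)%N * B (i %/ r)%N (j %/ r)%N.

Lemma eqn_divmod r x y : (x == y) = (x %% r == y %% r)%N && (x %/ r == y %/ r)%N.
Proof.
apply/eqP/andP => [-> // | [/eqP eq_mod /eqP eq_div]].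
by rewrite (divn_eq x r) (divn_eq y r) eq_mod eq_div.
Qed.

Lemma rgh_kron r s A B :
  rg_hadamard r A -> rg_hadamard s B -> rg_hadamard (r * s) (kron r A B).
Proof.
move=> hA hB; have r_gt0 := rgh_gt0 hA.
have mod_lt x : (x %% r < r)%N by rewrite ltn_pmod.
have div_lt x : (x < r * s)%N -> (x %/ r < s)%N by rewrite ltn_divLR // mulnC.
split.
- by rewrite muln_gt0 r_gt0 (rgh_gt0 hB).
- by move=> x y; apply: pm_oneM; [apply: (rgh_pm hA) | apply: (rgh_pm hB)].
- by move=> x y /div_lt xs /div_lt ys; rewrite /kron (rgh_sym hA) // (rgh_sym hB).
- by move=> x /div_lt xs; rewrite /kron (rgh_diag hA) // (rgh_diag hB) // mod0n div0n.
- move=> x /div_lt xs; rewrite /kron !sum_divmod_mul //.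
  by rewrite (rgh_row hA) // (rgh_row hB) // mod0n div0n.
- move=> x x' /div_lt xs /div_lt x's; under eq_bigr => y _ do rewrite /kron mulrACA.
  rewrite (sum_divmod_mul _ (fun y => A (x %% r)%N y * A (x' %% r)%N y)
                            (fun y => B (x %/ r)%N y * B (x' %/ r)%N y)) //.
  by rewrite (rgh_orth hA) // (rgh_orth hB) // -natrM mulnACA mulnb -eqn_divmod.
Qed.

Lemma rgh_one : rg_hadamard 1 (fun _ _ => 1).
Proof.
split=> // [x y | x x']; first by left.
by rewrite !ltnS !leqn0 => /eqP-> /eqP->; rewrite big_nat1.
Qed.

Fixpoint kronX r A m : nat -> nat -> int :=
  if m is m'.+1 then kron r A (kronX r A m') else fun _ _ => 1.

Lemma rgh_kronX r A m : rg_hadamard r A -> rg_hadamard (r ^ m) (kronX r A m).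
Proof.
move=> hA; elim: m => [|m IHm]; first exact: rgh_one.
by rewrite expnS; apply: rgh_kron.
Qed.

Lemma const_quad_kron r s A B i j k l : (0 < r)%N -> (0 < s)%N ->
  (forall x y, pm_one (A x y)) -> (forall x y, pm_one (B x y)) ->
  const_quad (r * s) (kron r A B) i j k l =
  const_quad r A (i %% r) (j %% r) (k %% r) (l %% r) &&
  const_quad s B (i %/ r) (j %/ r) (k %/ r) (l %/ r).
Proof.
move=> r_gt0 s_gt0 A_pm B_pm; rewrite /const_quad -const_on_divmod //; last 2 first.
- by move=> x; apply: col_prod4_neq0.
- by move=> y; apply: col_prod4_neq0.
by apply: eq_const_on => c; rewrite /col_prod4 /kron; ring.
Qed.

Lemma nconst_kron r s A B : (0 < r)%N -> (0 < s)%N ->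
  (forall x y, pm_one (A x y)) -> (forall x y, pm_one (B x y)) ->
  nconst (r * s) (kron r A B) = nconst r A * nconst s B.
Proof.
move=> r_gt0 s_gt0 A_pm B_pm; rewrite /nconst -sum4_divmod_mul //.
by apply: eq_sum4 => i j k l; rewrite const_quad_kron // -mulnb natrM.
Qed.

Lemma nconst_kronX r A m : rg_hadamard r A ->
  nconst (r ^ m) (kronX r A m) = nconst r A ^+ m.
Proof.
move=> hA; elim: m => [|m IHm]; first by rewrite /nconst /sum4 !big_nat1.
rewrite expnS exprS -IHm nconst_kron ?expn_gt0 ?(rgh_gt0 hA) //.
- exact: (rgh_pm hA).
- exact: (rgh_pm (rgh_kronX m hA)).
Qed.

Definition rgh_test n (G : nat -> nat -> int) : bool :=
  [&& all2rel (fun x y => G x y == G y x) (iota 0 n),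
      all (fun x => G x x == G 0%N 0%N) (iota 0 n),
      all (fun x => \sum_(0 <= y < n) G x y == \sum_(0 <= y < n) G 0%N y) (iota 0 n) &
      all2rel (fun x x' => \sum_(0 <= y < n) G x y * G x' y == (n * (x == x'))%:R)
              (iota 0 n)].

Lemma rgh_testP n G : (0 < n)%N -> (forall x y, pm_one (G x y)) ->
  rgh_test n G -> rg_hadamard n G.
Proof.
move=> n_gt0 G_pm /and4P[/allrelP sym /allP diag /allP row /allrelP orth].
split=> // [x y xn yn | x xn | x xn | x x' xn x'n]; apply/eqP.
- by apply: sym; rewrite mem_iota0.
- by apply: diag; rewrite mem_iota0.
- by apply: row; rewrite mem_iota0.
- by apply: orth; rewrite mem_iota0.
Qed.

Definition A4 (x y : nat) : int := (-1) ^+ (x == y).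

Lemma rgh_A4 : rg_hadamard 4 A4.
Proof.
apply: rgh_testP => // [x y | ]; first exact: pm_one_sign.
by rewrite /rgh_test unlock; vm_compute.
Qed.

Lemma nconst_A4 : nconst 4 A4 = 64.
Proof. by apply/eqP; rewrite /nconst /sum4 unlock; vm_compute. Qed.

Definition latin8 : seq (seq nat) :=
  [:: [:: 0; 4; 2; 6; 7; 5; 1; 3]; [:: 4; 0; 7; 3; 2; 1; 6; 5];
      [:: 2; 7; 0; 5; 6; 4; 3; 1]; [:: 6; 3; 5; 0; 1; 2; 4; 7];
      [:: 7; 2; 6; 1; 0; 3; 5; 4]; [:: 5; 1; 4; 2; 3; 0; 7; 6];
      [:: 1; 6; 3; 4; 5; 7; 0; 2]; [:: 3; 5; 1; 7; 4; 6; 2; 0]]%N.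

(* The parity of the inner product of the binary expansions of r, x < 8:
   the Sylvester Hadamard matrix of order 8 is [(-1) ^+ sylvester8 r x]. *)
Definition sylvester8 (r x : nat) : bool :=
  (odd r && odd x) (+) (odd r./2 && odd x./2) (+) (odd (r %/ 4) && odd (x %/ 4)).

(* Block (a, b) of B64 is h^T h for the row h of the Sylvester matrix
   indexed by latin8[a][b], a symmetric Latin square with zero diagonal. *)
Definition B64 (x y : nat) : int :=
  let r := nth 0%N (nth [::] latin8 (x %/ 8)) (y %/ 8) in
  (-1) ^+ (sylvester8 r (x %% 8) (+) sylvester8 r (y %% 8)).

Lemma rgh_B64 : rg_hadamard 64 B64.
Proof.
apply: rgh_testP => // [x y | ]; first exact: pm_one_sign.
by rewrite /rgh_test unlock; vm_compute.
Qed.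

Lemma B64_nonconst_quad : ~~ const_quad 64 B64 0 1 32 34.
Proof. by vm_compute. Qed.

Lemma B64_quad_sum : \sum_(0 <= c < 64) col_prod4 B64 0 1 32 34 c = -32.
Proof. by apply/eqP; rewrite unlock; vm_compute. Qed.

Lemma nconst_B64_gt0 : 0 < nconst 64 B64.
Proof. exact: nconst_gt0 (rgh_pm rgh_B64). Qed.

Lemma nconst_B64_lt : nconst 64 B64 < 64 ^+ 3.
Proof.
rewrite -natrX.
apply: (nconst_lt (rgh_pm rgh_B64) (rgh_col_orth rgh_B64) _ _ _ _ B64_nonconst_quad) => //.
by rewrite B64_quad_sum.
Qed.

Definition family_kernel N k :=
  kron (64 ^ k) (kronX 64 B64 k) (kronX 4 A4 (3 * (N - k))).

Lemma family_order N k : (k <= N)%N -> (64 ^ k * 4 ^ (3 * (N - k)) = 4 ^ (3 * N))%N.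
Proof. by move=> kN; rewrite (_ : 64 = 4 ^ 3)%N // -!expnM -expnD -mulnDr subnKC. Qed.

Lemma rgh_family N k : (k <= N)%N -> rg_hadamard (4 ^ (3 * N)) (family_kernel N k).
Proof.
move=> kN; rewrite -(family_order kN).
by apply: rgh_kron; apply: rgh_kronX; [exact: rgh_B64 | exact: rgh_A4].
Qed.

Lemma nconst_family N k : (k <= N)%N ->
  nconst (4 ^ (3 * N)) (family_kernel N k) = nconst 64 B64 ^+ k * (64 ^+ 3) ^+ (N - k).
Proof.
move=> kN; rewrite -(family_order kN) nconst_kron ?expn_gt0 //.
- by rewrite (nconst_kronX _ rgh_B64) (nconst_kronX _ rgh_A4) nconst_A4 exprM.
- exact: (rgh_pm (rgh_kronX _ rgh_B64)).
- exact: (rgh_pm (rgh_kronX _ rgh_A4)).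
Qed.

Lemma expr_trade_inj (R : realDomainType) (a c : R) N k l : 0 < a -> a < c ->
  (k <= N)%N -> (l <= N)%N -> a ^+ k * c ^+ (N - k) = a ^+ l * c ^+ (N - l) -> k = l.
Proof.
move=> a_gt0 a_lt_c.
suff trade_lt k' l' : (k' < l')%N -> (l' <= N)%N ->
    a ^+ l' * c ^+ (N - l') < a ^+ k' * c ^+ (N - k').
  move=> kN lN e; case: (ltngtP k l) => // [kl | lk].
    by have := trade_lt _ _ kl lN; rewrite e ltxx.
  by have := trade_lt _ _ lk kN; rewrite e ltxx.
move=> kl lN; have -> : l' = (k' + (l' - k'))%N by rewrite subnKC // ltnW.
rewrite (_ : N - k' = N - (k' + (l' - k')) + (l' - k'))%N; last by lia.
rewrite !exprD mulrAC [X in _ < X]mulrA.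
have c_gt0 : 0 < c by apply: lt_trans a_lt_c.
by rewrite ltr_pM2l ?mulr_gt0 ?exprn_gt0 // ltrXn2r // ?subn_eq0 -?ltnNge // ltW.
Qed.

Theorem mainTheorem7 :
  forall N : nat, exists (m : nat) (Hs : 'I_N -> 'M[int]_(4 ^ m)),
    (forall k, hadamard (Hs k) /\ graphical (Hs k) /\ regular (Hs k)) /\
    (forall k l, k != l -> ~ hadamard_equiv (Hs k) (Hs l)).
Proof.
move=> N; exists (3 * N)%N, (fun k : 'I_N => kernel_mx _ (family_kernel N k)).
have kN (k : 'I_N) : (k <= N)%N := ltnW (ltn_ord k).
split=> [k | k l k_neq_l /mx_nconst_equiv]; first exact/kernel_mx_rgh/rgh_family.
rewrite !mx_nconst_kernel !nconst_family //.
move/(expr_trade_inj nconst_B64_gt0 nconst_B64_lt (kN k) (kN l))/val_inj/eqP.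
by rewrite (negbTE k_neq_l).
Qed.
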